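(* Let $G$ be a connected graph with a fixed vertex $w$. Take a cycle $C_c$ of length $c \geq 7$, vertex-disjoint from $G$, and identify one vertex of the cycle with $w$; denote the resulting graph by $G^*$. Let $v_1$ be a neighbor of $w$ on the cycle $C_c$. Then $\delta_{G^*}(w) = t_{G^*}(w) - t_{G^*-v_1}(w)\leq -2$.
   Context: All graphs are finite, simple, undirected. For a graph $H$ and vertex $x$, the transmission is $t_H(x)=\sum_{y\in V(H)}\mathrm{dist}_H(x,y)$; $H-v$ denotes $H$ with vertex $v$ and its incident edges deleted. The quantity $\delta_{G^*}(w)$ is taken with respect to the vertex $v_1$, i.e. $\delta_{G^*}(w)=t_{G^*}(w)-t_{G^*-v_1}(w)$. *)

From HB Require Import structures.
From mathcomp Require Import all_boot all_order all_algebra.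
Unset Strict Implicit. Unset Printing Implicit Defensive.

Definition simple_graph {V : finType} (e : rel V) : Prop :=
  symmetric e /\ irreflexive e.

Definition connected_graph {V : finType} (e : rel V) : Prop :=
  forall x y : V, connect e x y.

Definition walk_len {V : finType} (e : rel V) (n : nat) (x y : V) : bool :=
  [exists p : n.-tuple V, path e x p && (last x p == y)].

(* distance = least length of a walk from x to y; in a connected graph this
   is < #|V|.  (Convention for unreachable pairs: #|V|; irrelevant here since
   all graphs considered are connected.) *)
Definition dist {V : finType} (e : rel V) (x y : V) : nat :=
  find (fun n => walk_len e n x y) (iota 0 #|V|).

Definition transmission {V : finType} (e : rel V) (x : V) : nat :=
  \sum_(y : V) dist e x y.

(* G* : G with a cycle C_c glued at w.  Vertices: inl a for a in G,
   inr i (i : 'I_(c-1)) for the cycle vertex u_{i+1}, where the cycle is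
   w = u_0, u_1, ..., u_{c-1}, u_0. *)
Definition gstar_rel {T : finType} (e : rel T) (w : T) (c : nat)
  : rel (T + 'I_c.-1) :=
  fun x y =>
    match x, y with
    | inl a, inl b => e a b
    | inr i, inr j => ((val i).+1 == val j) || ((val j).+1 == val i)
    | inl a, inr j => (a == w) && ((val j == 0) || (val j == c.-2))
    | inr i, inl b => (b == w) && ((val i == 0) || (val i == c.-2))
    end.

Definition del_rel {V : finType} (e : rel V) (v : V) : rel {x : V | x != v} :=
  fun x y => e (val x) (val y).

Lemma inl_neq_inr {T : finType} {n : nat} (w : T) (i : 'I_n) :
  (inl w : T + 'I_n) != inr i.
Proof. by []. Qed.

From HB Require Import structures.
From mathcomp Require Import all_boot all_order all_algebra.
From mathcomp Require Import zify.
Import Order.TTheory GRing.Theory Num.Theory.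

(* Deleting v1 brings no vertex closer to w, and it pushes the cycle neighbour
   x of v1 other than w from distance at most 2 to distance c - 2 >= 5, since
   the only route left goes round the rest of the cycle.  Comparing the
   transmissions t of w in G* and t' of w in G* - v1 term by term gives
   t' >= t - d(w, v1) - d(w, x) + 5 >= t + 2.  The bound c - 2 comes from a
   potential on G* - v1 that grows by at most one along each edge. *)

Set Implicit Arguments.
Unset Strict Implicit.
Unset Printing Implicit Defensive.

Section Walks.
Variable V : finType.
Implicit Types (r : rel V) (x y z : V).

Lemma walk_lenP r n x y :
  reflect (exists p : seq V, [/\ size p = n, path r x p & last x p = y])
          (walk_len r n x y).
Proof.
apply: (iffP existsP) => [[p /andP[hp /eqP hl]] | [p [hs hp hl]]].
  by exists (val p); rewrite size_tuple.
have hs' : size p == n by apply/eqP.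
by exists (Tuple hs'); rewrite /= hp hl eqxx.
Qed.

Lemma walk_len1 r x y : walk_len r 1 x y = r x y.
Proof.
apply/walk_lenP/idP => [[[|z [|? ?]] [//= _ /andP[hxz _] <-]] | hxy] //.
by exists [:: y]; rewrite /= hxy.
Qed.

Lemma walk_len_cat r m n x y z :
  walk_len r m x y -> walk_len r n y z -> walk_len r (m + n) x z.
Proof.
move=> /walk_lenP[p [<- hp hpy]] /walk_lenP[q [<- hq <-]].
apply/walk_lenP; exists (p ++ q).
by rewrite size_cat cat_path last_cat hp hpy hq.
Qed.

Lemma walk_len_connect r n x y : walk_len r n x y -> connect r x y.
Proof. by move=> /walk_lenP[p [_ hp <-]]; apply/connectP; exists p. Qed.

Lemma dist_le_walk r n x y : walk_len r n x y -> n < #|V| -> dist r x y <= n.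
Proof.
move=> hw hn; rewrite leqNgt; apply/negP => hlt.
by have := before_find 0 hlt; rewrite nth_iota // add0n hw.
Qed.

Lemma walk_len_dist r x y : dist r x y < #|V| -> walk_len r (dist r x y) x y.
Proof.
rewrite /dist => h.
have hh : has (fun n => walk_len r n x y) (iota 0 #|V|) by rewrite has_find size_iota.
by have := nth_find 0 hh; rewrite nth_iota ?add0n.
Qed.

Lemma dist_lt_card r x y : connect r x y -> dist r x y < #|V|.
Proof.
move=> /connectP[p hp ->]; case: (shortenP hp) => q hq uq _.
have hq_card : size q < #|V|.
  by move/card_uniqP: uq => /= uq; have := max_card (mem (x :: q)); rewrite uq.
apply: (leq_ltn_trans _ hq_card); apply: dist_le_walk (hq_card).
by apply/walk_lenP; exists q.
Qed.

Lemma dist_ge_potential r (f : V -> nat) x y :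
  (forall a b, r a b -> f b <= f a + 1) -> minn #|V| (f y - f x) <= dist r x y.
Proof.
move=> hf; have [/walk_len_dist/walk_lenP[p [<- hp <-]] | ] := ltnP (dist r x y) #|V|;
  last by lia.
suff : f (last x p) <= f x + size p by lia.
elim: p x hp => [|z p IHp] x /=; first by rewrite addn0.
by move=> /andP[/hf hxz /IHp]; lia.
Qed.

End Walks.

Lemma walk_len_homo (U V : finType) (f : U -> V) (r : rel U) (r' : rel V) n x y :
  {homo f : a b / r a b >-> r' a b} ->
  walk_len r n x y -> walk_len r' n (f x) (f y).
Proof.
move=> hf /walk_lenP[p [<- hp <-]]; apply/walk_lenP; exists (map f p).
by rewrite size_map path_map last_map; split=> //; apply: sub_path hp.
Qed.

Lemma connect_homo (U V : finType) (f : U -> V) (r : rel U) (r' : rel V) x y :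
  {homo f : a b / r a b >-> r' a b} ->
  connect r x y -> connect r' (f x) (f y).
Proof.
move=> hf /dist_lt_card/walk_len_dist hw.
exact: walk_len_connect (walk_len_homo hf hw).
Qed.

Section VertexDeletion.
Variables (V : finType) (r : rel V) (v : V).
Local Notation V' := {x : V | x != v}.

Lemma card_del : #|{: V'}| = #|V|.-1.
Proof. by rewrite card_sig -(cardC1 v); apply: eq_card. Qed.

Lemma dist_del_ge s (hs : s != v) (y : V') :
  connect r s (val y) -> dist r s (val y) <= dist (del_rel r v) (exist _ s hs) y.
Proof.
move=> /dist_lt_card hy; have hcard := card_del.
have [hlt | ] := ltnP (dist (del_rel r v) (exist _ s hs) y) #|{: V'}|; last by lia.
apply: dist_le_walk; last by lia.
exact: (walk_len_homo (f := val) _ (walk_len_dist hlt)).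
Qed.

Lemma transmission_del_gap s (hs : s != v) x (hx : x != v) k :
  (forall y, connect r s y) ->
  dist r s v + dist r s x + k <= dist (del_rel r v) (exist _ s hs) (exist _ x hx) ->
  ((transmission r s)%:Z - (transmission (del_rel r v) (exist _ s hs))%:Z <= - k%:R)%R.
Proof.
move=> conn gap; set s' : V' := exist _ s hs; set x' : V' := exist _ x hx.
have -> : transmission r s
          = dist r s v + dist r s x + \sum_(y : V' | y != x') dist r s (val y).
  by rewrite /transmission (bigD1 v) //= (big_sub (predC1 v)) (bigD1 x') ?addnA.
have -> : transmission (del_rel r v) s'
          = dist (del_rel r v) s' x' + \sum_(y : V' | y != x') dist (del_rel r v) s' y.
  by rewrite /transmission (bigD1 x').
have : \sum_(y : V' | y != x') dist r s (val y)
       <= \sum_(y : V' | y != x') dist (del_rel r v) s' y.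
  by apply: leq_sum => y _; apply: dist_del_ge.
move: gap; rewrite -/s' -/x'; lia.
Qed.

End VertexDeletion.

Section GluedCycle.
Variables (T : finType) (e : rel T) (w : T) (c : nat).
Local Notation V := (T + 'I_c.-1)%type.
Local Notation r := (gstar_rel e w c).

Lemma card_gstar : #|{: V}| = #|T| + c.-1.
Proof. by rewrite card_sum card_ord. Qed.

Lemma walk_len_gstar_cycle (j : 'I_c.-1) : walk_len r j.+1 (inl w) (inr j).
Proof.
case: j => j; elim: j => [|j IHj] hj; first by rewrite walk_len1 /= eqxx.
rewrite -addn1; apply: walk_len_cat (IHj (ltnW hj)) _.
by rewrite walk_len1 /= eqxx.
Qed.

Lemma connect_gstar : connected_graph e -> forall x, connect r (inl w) x.
Proof.
move=> hconn [a | j]; first exact: (connect_homo (f := inl)) (hconn w a).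
exact: walk_len_connect (walk_len_gstar_cycle j).
Qed.

(* The cycle is w = u_0, u_1, ..., u_(c-1) with [inr j] = u_(j+1); the
   potential of a cycle vertex is the length of the arc from w to it avoiding
   v1 = [inr i], which is u_1 or u_(c-1). *)
Definition cycle_potential (i : 'I_c.-1) (x : V) : nat :=
  if x is inr j then (if val i == 0 then c.-1 - j else j.+1) else 0.

Lemma cycle_potential_lipschitz i : r (inl w) (inr i) ->
  forall a b, del_rel r (inr i) a b ->
  cycle_potential i (val b) <= cycle_potential i (val a) + 1.
Proof.
move=> /andP[_ /= hi] [[a|ja] ha] [[b|jb] hb] //=; rewrite /del_rel /=.
- move=> /andP[_ hjb]; have := ltn_ord jb.
  have hji : jb != i :> nat by apply: contraNneq hb => /val_inj ->.
  by case: ifP; lia.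
- by have := ltn_ord ja; have := ltn_ord jb; case: ifP; lia.
Qed.

End GluedCycle.

Theorem lemma2 (T : finType) (e : rel T) (w : T) (c : nat)
  (hG : simple_graph e) (hconn : connected_graph e) (hc : 7 <= c)
  (i : 'I_c.-1) (hv1 : gstar_rel e w c (inl w) (inr i)) :
  ((transmission (gstar_rel e w c) (inl w))%:Z
   - (transmission (del_rel (gstar_rel e w c) (inr i))
        (exist _ (inl w) (inl_neq_inr w i)))%:Z <= - 2)%R.
Proof.
set r := gstar_rel e w c; set s' := exist _ (inl w) (inl_neq_inr w i).
have hV := card_gstar T c.
have dist_v1 : dist r (inl w) (inr i) <= 1.
  by apply: dist_le_walk; [rewrite walk_len1 | rewrite hV; lia].
suff [x0 hx0 [dist_x0 pot_x0]] : exists2 x0, x0 != inr i &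
    dist r (inl w) x0 <= 2 /\ 5 <= cycle_potential i x0.
  apply: (transmission_del_gap (hx := hx0) (connect_gstar w hconn)).
  have dist_del_x0 : 5 <= dist (del_rel r (inr i)) s' (exist _ x0 hx0).
    have := dist_ge_potential s' (exist _ x0 hx0) (cycle_potential_lipschitz hv1).
    by rewrite card_del hV /= -/r; lia.
  exact: leq_trans (leq_add (leq_add dist_v1 dist_x0) (leqnn 2)) dist_del_x0.
move: (hv1) => /andP[_ /orP[/eqP i0 | /eqP ilast]].
- have h1 : 1 < c.-1 by lia.
  exists (inr (Ordinal h1)); first by apply/eqP => -[/(congr1 val)]; rewrite /= i0.
  split; last by rewrite /= i0 eqxx; lia.
  by apply: dist_le_walk (walk_len_gstar_cycle _ _ (Ordinal h1)) _; rewrite hV /=; lia.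
- have h3 : c - 3 < c.-1 by lia.
  exists (inr (Ordinal h3)); first by apply/eqP => -[/(congr1 val)]; rewrite /= ilast; lia.
  split; last by rewrite /= ilast; case: ifP; lia.
  apply: dist_le_walk; last by rewrite hV; lia.
  by apply: (@walk_len_cat _ _ 1 1 _ (inr i)); rewrite walk_len1 //= ilast; lia.
Qed.
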